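(* For every $n\in\mathbb N$ there exists an $n$-saturated closed graph on the Cantor space $2^\omega$; that is, there is a graph $G$ with vertex set $V(G)=2^\omega$ whose edge relation $E(G)$ is a closed subset of $2^\omega\times 2^\omega$ and which is $n$-saturated.
   Context: A graph is a pair $G=(V(G),E(G))$ where $V(G)$ is a non-empty set and $E(G)\subseteq V(G)\times V(G)$ is a symmetric and reflexive relation (every vertex has a loop). A graph on a topological space $X$ is closed if its edge relation is a closed subset of $X^2$. For $A\subseteq V(G)$, a type over $A$ is a function $f\colon A\to\{0,1\}$; a vertex $v\in V(G)\setminus A$ realizes $f$ if for every $a\in A$, $(a,v)\in E(G)$ if and only if $f(a)=1$. The graph $G$ is $n$-saturated if for every $A\subseteq V(G)$ with $|A|<n$ and every type $f\in\{0,1\}^A$ there is a vertex $x\in V(G)\setminus A$ realizing $f$. The Cantor space $2^\omega=\{0,1\}^{\mathbb N}$ carries the product topology. *)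

From HB Require Import structures.
From mathcomp Require Import all_boot all_order all_algebra.
From mathcomp Require Import all_classical all_reals all_analysis.
Set Implicit Arguments. Unset Strict Implicit. Unset Printing Implicit Defensive.
Local Open Scope classical_set_scope.

Definition is_graph (T : Type) (E : set (T * T)) : Prop :=
  (forall x y, E (x, y) -> E (y, x)) /\ (forall x, E (x, x)).

Definition card_lt (T : Type) (A : set T) (n : nat) : Prop :=
  exists2 k : nat, (k < n)%N & (A #= `I_k)%card.

(* v realizes the type f over A (only the values of f on A matter). *)
Definition realizes (T : Type) (E : set (T * T)) (A : set T) (f : T -> bool) (v : T) : Prop :=
  ~ A v /\ (forall a, A a -> (E (a, v) <-> f a = true)).

Definition n_saturated (T : Type) (E : set (T * T)) (n : nat) : Prop :=
  forall (A : set T) (f : T -> bool), card_lt A n -> exists v, realizes E A f v.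

From mathcomp Require Import all_boot all_order all_algebra.
From mathcomp Require Import all_classical all_reals all_analysis.
Local Open Scope classical_set_scope.

(* Cut a point x of 2^omega into n + 1 interleaved columns
   x_j(i) = x(i(n+1) + j), and join x and y when they are equal or one is a
   column j < n of the other.  The column maps are continuous and 2^omega is
   Hausdorff, so this relation is closed.  To realize a type f over
   A = {a_0, ..., a_(k-1)} with k <= n, take v whose column j is a_j when
   f(a_j) holds and some point outside A otherwise, and use the spare column n
   to diagonalize v away from every a_t and every column of every a_t: then
   the only edges between v and A are the intended ones. *)

Lemma closed_equalizer {X Y : topologicalType} (f g : X -> Y) :
  hausdorff_space Y -> continuous f -> continuous g ->
  closed [set x | f x = g x].
Proof.
move=> hY cf cg x clx; apply: hY => A B fxA gxB.
have nfA : nbhs x (f @^-1` A) := cf x _ fxA.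
have ngB : nbhs x (g @^-1` B) := cg x _ gxB.
have [y [fgy [Afy Bgy]]] := clx _ (filterI nfA ngB).
by exists (f y); split; last rewrite fgy.
Qed.

Lemma cantor_continuous {X : topologicalType} (f : X -> cantor_space) :
  (forall k, continuous (fun x => f x k)) -> continuous f.
Proof. by move=> cf x; apply/pointwise_cvgP => k; exact: cf. Qed.

Lemma divnMDl_small (t j d : nat) : (j < d)%N -> ((t * d + j) %/ d)%N = t.
Proof. by move=> jd; rewrite divnMDl ?divn_small ?addn0 // (leq_ltn_trans _ jd). Qed.

Section columns.
Variable n : nat.
Local Notation N := n.+1.

Definition column (j : nat) (x : cantor_space) : cantor_space :=
  fun i => x (i * N + j)%N.

Definition glue (g : nat -> cantor_space) : cantor_space :=
  fun m => g (m %% N)%N (m %/ N)%N.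

Lemma column_glue g j : (j < N)%N -> column j (glue g) = g j.
Proof.
move=> jN; apply: functional_extensionality_dep => i.
by rewrite /column /glue modnMDl modn_small // divnMDl_small.
Qed.

Lemma column_continuous j : continuous (column j).
Proof. by apply: cantor_continuous => i; exact: proj_continuous. Qed.

Lemma exists_columns_avoiding (g : nat -> cantor_space)
    (c : nat -> nat -> cantor_space) :
  exists2 v, (forall j, (j < n)%N -> column j v = g j) &
    forall t j, (j < N)%N -> v <> c t j.
Proof.
pose s i := ~~ c (i %/ N)%N (i %% N)%N (i * N + n)%N.
pose v := glue (fun j => if (j < n)%N then g j else s).
exists v => [j jn|t j jN vc].
  by rewrite column_glue ?jn // ltnW.
have := congr1 (fun x => column n x (t * N + j)%N) vc.
rewrite column_glue // ltnn /s modnMDl modn_small // divnMDl_small // /column.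
by case: (c t j _).
Qed.

Definition column_rel : set (cantor_space * cantor_space) :=
  [set p | p.1 = p.2 \/ (exists2 j, (j < n)%N & p.1 = column j p.2)
                     \/ (exists2 j, (j < n)%N & p.2 = column j p.1)].

Lemma column_rel_graph : is_graph column_rel.
Proof.
rewrite /column_rel; split=> [x y /= [->|[[j jn ->]|[j jn ->]]]|x]; last by left.
- by left.
- by right; right; exists j.
- by right; left; exists j.
Qed.

Lemma closed_column_rel : closed column_rel.
Proof.
have fst_cont : continuous (@fst cantor_space cantor_space).
  by move=> p; exact: cvg_fst.
have snd_cont : continuous (@snd cantor_space cantor_space).
  by move=> p; exact: cvg_snd.
have column_fst_cont j : continuous (fun p : cantor_space * cantor_space => column j p.1).
  by move=> p; apply: continuous_comp; [exact: fst_cont|exact: column_continuous].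
have column_snd_cont j : continuous (fun p : cantor_space * cantor_space => column j p.2).
  by move=> p; apply: continuous_comp; [exact: snd_cont|exact: column_continuous].
have -> : column_rel = [set p | p.1 = p.2] `|`
    (\bigcup_(j in `I_n) [set p | p.1 = column j p.2] `|`
     \bigcup_(j in `I_n) [set p | p.2 = column j p.1]).
  apply/seteqP; split=> p [|[[j jn]|[j jn]]];
    do ?[by left | by right; left; exists j | by right; right; exists j].
have closed_eq f g := @closed_equalizer _ _ f g cantor_space_hausdorff.
apply: closedU; first exact: closed_eq.
by apply: closedU; apply: closed_bigcup (@finite_II n) _ => j _; exact: closed_eq.
Qed.

Lemma column_rel_realizes k (e : nat -> cantor_space) (f : cantor_space -> bool) :
  (k <= n)%N -> exists v, realizes column_rel (e @` `I_k) f v.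
Proof.
move=> kn.
have [d _ dNe] := exists_columns_avoiding e (fun t _ => e t).
have {}dNe t : d <> e t := dNe t 0%N isT.
pose col j := if (j < k)%N && f (e j) then e j else d.
pose ec t j := if (j < n)%N then column j (e t) else e t.
have [v vcol vNec] := exists_columns_avoiding col ec.
have vNe t : v <> e t by have := vNec t n; rewrite /ec ltnn; exact.
have vNcol t j : (j < n)%N -> v <> column j (e t).
  by move=> jn; have := vNec t j (ltnW jn); rewrite /ec jn.
exists v; split; first by case=> t _ /esym /vNe.
move=> _ [t tk <-]; split.
- case=> [/esym/vNe|[[j jn /=]|[j jn /vNcol]]] //.
  rewrite vcol // /col; case: ifP => [/andP[_ fj] ->|_ /esym/dNe] //.
- move=> ft; right; left; exists t; first exact: leq_trans tk kn.
  by rewrite /= vcol ?(leq_trans tk kn) // /col tk ft.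
Qed.

Lemma column_rel_saturated : n_saturated column_rel n.
Proof.
move=> A f [k kn /card_esym/card_set_bijP[e [efun _ esurj]]].
rewrite -(surj_image_eq _ esurj); last by move=> _ [t tk <-]; exact: efun.
exact: column_rel_realizes (ltnW kn).
Qed.

End columns.

Theorem theorem1 (n : nat) :
  exists E : set (cantor_space * cantor_space),
    is_graph E /\ closed E /\ n_saturated E n.
Proof.
exists (column_rel n); split; first exact: column_rel_graph.
by split; [exact: closed_column_rel | exact: column_rel_saturated].
Qed.
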